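(* Let $T:\mathbb{Z}\to\mathbb{Z}$ be defined by $T(n)=n/2$ if $n$ is even and $T(n)=(3n+1)/2$ if $n$ is odd, and let $[2]_3$ be the set of integers congruent to $2\pmod 3$. Define $T^*:[2]_3\to\mathbb{Z}$ by $$T^*(n)=\begin{cases} T(n)=\frac{3n+1}{2}, & n\equiv -1\pmod 6,\\ T^2(n)=\frac{3n+2}{4}, & n\equiv 2\pmod{12},\\ T^3(n)=\frac{3n+4}{8}, & n\equiv -4\pmod{24},\\ T^4(n)=\frac{3n+8}{16}, & n\equiv 8\pmod{48},\\ T^5(n)=\frac{3n+16}{32}, & n\equiv -16\pmod{96},\\ T^6(n)=\frac{3n+32}{64}, & n\equiv 32\pmod{192},\\ T^6(n)=\frac{n}{64}, & n\equiv -64\pmod{192}.\end{cases}$$ Then (i) the range of $T^*$ is exactly $[2]_3$; and (ii) for every $n\in[2]_3$, the $T^*$-trajectory $((T^* )^k(n))_{k\ge 0}$ consists of finitely many numbers congruent to $5\pmod 9$ followed only by numbers congruent to $2$ or $8\pmod 9$.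
   Context: The seven residue classes in the definition partition $[2]_3$. $T^k$ and $(T^* )^k$ denote $k$-fold iterates, with the $0$-th iterate the identity. *)

From Stdlib Require Import ZArith.
Open Scope Z_scope.

Definition T (n : Z) : Z :=
  if Z.even n then n / 2 else (3 * n + 1) / 2.

Definition iterZ (k : nat) (f : Z -> Z) (n : Z) : Z := Nat.iter k f n.

Definition in23 (n : Z) : Prop := n mod 3 = 2.

(* T* on [2]_3, defined case-wise by iterates of T as in the paper.
   The seven residue classes partition [2]_3; outside [2]_3 the value
   (identity) is an irrelevant default. *)
Definition Tstar (n : Z) : Z :=
  if Z.eqb (n mod 6) 5 then iterZ 1 T n
  else if Z.eqb (n mod 12) 2 then iterZ 2 T n
  else if Z.eqb (n mod 24) 20 then iterZ 3 T n
  else if Z.eqb (n mod 48) 8 then iterZ 4 T n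
  else if Z.eqb (n mod 96) 80 then iterZ 5 T n
  else if Z.eqb (n mod 192) 32 then iterZ 6 T n
  else if Z.eqb (n mod 192) 128 then iterZ 6 T n
  else n.

From Stdlib Require Import ZArith Lia Wf_nat.
Open Scope Z_scope.

(* On each of its first six residue classes, T* is a run of halvings
   2^j (2b + 1) |-> 2b + 1 followed by one odd step 2b + 1 |-> 3b + 2, and the
   class pins b down to 3a or 3a + 2, so the value is 9a + 2 or 9a + 8.  On the
   last class T* is n |-> n / 64; since 64 = 1 mod 9, this preserves the residue
   mod 9 (hence mod 3) and strictly decreases |n|.  So T* maps [2]_3 into
   itself, onto it because T*(64 m) = m, and a residue 5 mod 9 can survive only
   finitely many steps, each a division by 64, while residues 2 and 8 are
   never left. *)

Lemma T_even (y : Z) : T (2 * y) = y.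
Proof.
  unfold T. rewrite Z.even_mul; cbn [Z.even orb].
  rewrite Z.mul_comm, Z.div_mul; lia.
Qed.

Lemma T_odd (b : Z) : T (2 * b + 1) = 3 * b + 2.
Proof.
  unfold T. rewrite Z.even_add, Z.even_mul; cbn [Z.even orb Bool.eqb].
  replace (3 * (2 * b + 1) + 1) with ((3 * b + 2) * 2) by ring.
  rewrite Z.div_mul; lia.
Qed.

Lemma iter_T_pow2 (j : nat) (y : Z) : iterZ j T (2 ^ Z.of_nat j * y) = y.
Proof.
  induction j as [|j IH]; [exact (Z.mul_1_l y)|].
  unfold iterZ in *. rewrite Nat.iter_succ_r.
  rewrite Nat2Z.inj_succ, Z.pow_succ_r, <- Z.mul_assoc, T_even by lia.
  exact IH.
Qed.

Lemma iter_T_pow2_odd (j : nat) (n b : Z) :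
  n = 2 ^ Z.of_nat j * (2 * b + 1) -> iterZ (S j) T n = 3 * b + 2.
Proof.
  intros ->. change (T (iterZ j T (2 ^ Z.of_nat j * (2 * b + 1))) = 3 * b + 2).
  now rewrite iter_T_pow2, T_odd.
Qed.

Lemma Tstar_cases (n : Z) : in23 n ->
  Tstar n mod 9 = 2 \/ Tstar n mod 9 = 8 \/ n = 64 * Tstar n.
Proof.
  unfold in23, Tstar; intro Hn.
  destruct (Z.eqb_spec (n mod 6) 5).
  { rewrite (iter_T_pow2_odd 0 n (3 * (n / 6) + 2))
      by (Z.div_mod_to_equations; lia).
    Z.div_mod_to_equations; lia. }
  destruct (Z.eqb_spec (n mod 12) 2).
  { rewrite (iter_T_pow2_odd 1 n (3 * (n / 12)))
      by (Z.div_mod_to_equations; lia).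
    Z.div_mod_to_equations; lia. }
  destruct (Z.eqb_spec (n mod 24) 20).
  { rewrite (iter_T_pow2_odd 2 n (3 * (n / 24) + 2))
      by (Z.div_mod_to_equations; lia).
    Z.div_mod_to_equations; lia. }
  destruct (Z.eqb_spec (n mod 48) 8).
  { rewrite (iter_T_pow2_odd 3 n (3 * (n / 48)))
      by (Z.div_mod_to_equations; lia).
    Z.div_mod_to_equations; lia. }
  destruct (Z.eqb_spec (n mod 96) 80).
  { rewrite (iter_T_pow2_odd 4 n (3 * (n / 96) + 2))
      by (Z.div_mod_to_equations; lia).
    Z.div_mod_to_equations; lia. }
  destruct (Z.eqb_spec (n mod 192) 32).
  { rewrite (iter_T_pow2_odd 5 n (3 * (n / 192)))
      by (Z.div_mod_to_equations; lia).
    Z.div_mod_to_equations; lia. }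
  destruct (Z.eqb_spec (n mod 192) 128).
  { right; right. replace n with (2 ^ Z.of_nat 6 * (n / 64)) at 2
      by (Z.div_mod_to_equations; lia).
    rewrite iter_T_pow2. Z.div_mod_to_equations; lia. }
  exfalso. Z.div_mod_to_equations; lia.
Qed.

Lemma in23_Tstar (n : Z) : in23 n -> in23 (Tstar n).
Proof.
  intro Hn. pose proof (Tstar_cases n Hn). unfold in23 in *.
  Z.div_mod_to_equations; lia.
Qed.

Lemma Tstar_mul64 (m : Z) : in23 m -> Tstar (64 * m) = m.
Proof.
  unfold in23, Tstar; intro Hm.
  (* 64 m = 128 mod 192, so every test but the seventh fails. *)
  repeat match goal with
  | |- context [Z.eqb ?x ?r] =>
      destruct (Z.eqb_spec x r); [Z.div_mod_to_equations; try lia|]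
  end.
  - exact (iter_T_pow2 6 m).
  - exfalso. Z.div_mod_to_equations; lia.
Qed.

Section Trajectory.

Variables (A : Type) (f : A -> A) (P Q : A -> Prop) (size : A -> nat).

Hypothesis Q_invariant : forall x, Q x -> Q (f x).
Hypothesis P_step : forall x, P x -> Q (f x) \/ (P (f x) /\ (size (f x) < size x)%nat).

Lemma iter_Q_invariant (k : nat) (x : A) : Q x -> Q (Nat.iter k f x).
Proof. intro Hx; induction k as [|k IH]; [exact Hx | exact (Q_invariant _ IH)]. Qed.

Lemma iter_P_then_Q (x : A) : P x \/ Q x ->
  exists K : nat,
    (forall k, (k < K)%nat -> P (Nat.iter k f x)) /\
    (forall k, (K <= k)%nat -> Q (Nat.iter k f x)).
Proof.
  induction x as [x IH] using (well_founded_ind (well_founded_ltof A size)).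
  intros [Px | Qx].
  2: { exists 0%nat; split; [lia | intros k _; exact (iter_Q_invariant k x Qx)]. }
  assert (shift : forall K, (forall k, (K <= k)%nat -> Q (Nat.iter k f (f x))) ->
            forall k, (S K <= k)%nat -> Q (Nat.iter k f x)).
  { intros K HK [|k] Hk; [lia|]. rewrite Nat.iter_succ_r. apply HK; lia. }
  destruct (P_step x Px) as [Qfx | [Pfx lt_size]].
  - exists 1%nat; split.
    + intros k Hk; replace k with 0%nat by lia; exact Px.
    + apply (shift 0%nat); intros k _; exact (iter_Q_invariant k _ Qfx).
  - destruct (IH (f x) lt_size (or_introl Pfx)) as [K [HP HQ]].
    exists (S K); split; [|exact (shift K HQ)].
    intros [|k] Hk; [exact Px|]. rewrite Nat.iter_succ_r. apply HP; lia.
Qed.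

End Trajectory.

Definition in23_mod9_5 (n : Z) : Prop := in23 n /\ n mod 9 = 5.

Definition in23_mod9_2_8 (n : Z) : Prop := in23 n /\ (n mod 9 = 2 \/ n mod 9 = 8).

Lemma Tstar_mod9_2_8 (n : Z) : in23_mod9_2_8 n -> in23_mod9_2_8 (Tstar n).
Proof.
  intros [Hn H9]. split; [exact (in23_Tstar n Hn)|].
  pose proof (Tstar_cases n Hn). Z.div_mod_to_equations; lia.
Qed.

Lemma Tstar_mod9_5 (n : Z) : in23_mod9_5 n ->
  in23_mod9_2_8 (Tstar n) \/
  (in23_mod9_5 (Tstar n) /\ (Z.abs_nat (Tstar n) < Z.abs_nat n)%nat).
Proof.
  intros [Hn H9]. pose proof (in23_Tstar n Hn). pose proof (Tstar_cases n Hn).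
  unfold in23_mod9_2_8, in23_mod9_5, in23 in *. Z.div_mod_to_equations; lia.
Qed.

Theorem theorem5 :
  (forall m : Z, in23 m <-> exists n : Z, in23 n /\ Tstar n = m) /\
  (forall n : Z, in23 n ->
     exists K : nat,
       (forall k : nat, (k < K)%nat -> (iterZ k Tstar n) mod 9 = 5) /\
       (forall k : nat, (K <= k)%nat ->
          (iterZ k Tstar n) mod 9 = 2 \/ (iterZ k Tstar n) mod 9 = 8)).
Proof.
  split.
  - intro m; split.
    + intro Hm. exists (64 * m); split; [|exact (Tstar_mul64 m Hm)].
      unfold in23 in *; Z.div_mod_to_equations; lia.
    + intros [n [Hn <-]]. exact (in23_Tstar n Hn).
  - intros n Hn.
    assert (start : in23_mod9_5 n \/ in23_mod9_2_8 n).
    { unfold in23_mod9_5, in23_mod9_2_8, in23 in *. Z.div_mod_to_equations; lia. }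
    destruct (iter_P_then_Q Z Tstar in23_mod9_5 in23_mod9_2_8 Z.abs_nat
                Tstar_mod9_2_8 Tstar_mod9_5 n start) as [K [HP HQ]].
    exists K; split; intros k Hk; [apply HP | apply HQ]; exact Hk.
Qed.
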